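(* Let $b\ge2$ be an integer, $\lambda\in(1/b,1)$, and let $\phi$ be a real analytic $\mathbb{Z}$-periodic function satisfying condition (H). Then there exist $\varepsilon_1>0$ and a positive integer $Q_1$ such that for every $f\in\mathcal{F}_1$: $\sup_{x\in[0,1]}|f'(x)|\ge\varepsilon_1$, and for every $x\in[0,1]$ there exists $k\in\{1,\dots,Q_1\}$ with $|f^{(k)}(x)|\ge\varepsilon_1$.
   Context: $\Sigma=\{0,\dots,b-1\}^{\mathbb{Z}_+}$, $\gamma=1/(b\lambda)$, $Y(x,\mathbf{j})=-\sum_{n\ge1}\gamma^n\phi'\!\left(\frac{x}{b^n}+\frac{j_1}{b^n}+\cdots+\frac{j_n}{b}\right)$, $\Gamma_{\mathbf{j}}(x)=\int_0^xY(t,\mathbf{j})dt$. Condition (H): $Y(\cdot,\mathbf{j})-Y(\cdot,\mathbf{i})\not\equiv0$ for all $\mathbf{i}\ne\mathbf{j}$. For $n\in\mathbb{Z}_+$, $\mathcal{F}_n=\{\Gamma_{\mathbf{u}}-\Gamma_{\mathbf{v}}:\mathbf{u},\mathbf{v}\in\Sigma,\ u_n\ne v_n,\ u_j=v_j\text{ for }1\le j<n\}$. *)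

From Stdlib Require Import Reals.
From Coquelicot Require Import Coquelicot.
Open Scope R_scope.

Definition real_analytic (phi : R -> R) : Prop :=
  forall x0 : R, exists (a : nat -> R) (r : R), 0 < r /\
    forall x, Rabs (x - x0) < r -> is_pseries a (x - x0) (phi x).

Definition Z_periodic (phi : R -> R) : Prop := forall x, phi (x + 1) = phi x.

(* Digit sequences: s k encodes j_{k+1}, so Sigma = {0..b-1}^{Z_+}. *)
Definition in_Sigma (b : nat) (s : nat -> nat) : Prop := forall k, (s k < b)%nat.

(* The argument  x/b^n + j_1/b^n + ... + j_n/b  for n = m+1 *)
Definition arg_n (b : nat) (s : nat -> nat) (x : R) (m : nat) : R :=
  x / INR b ^ (S m) + sum_f_R0 (fun k => INR (s k) / INR b ^ (S m - k)) m.

Definition Yfun (b : nat) (lambda : R) (phi : R -> R) (x : R) (s : nat -> nat) : R :=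
  - Series (fun m => (/ (INR b * lambda)) ^ (S m) * Derive phi (arg_n b s x m)).

Definition Gammafun (b : nat) (lambda : R) (phi : R -> R) (s : nat -> nat) (x : R) : R :=
  RInt (fun t => Yfun b lambda phi t s) 0 x.

Definition cond_H (b : nat) (lambda : R) (phi : R -> R) : Prop :=
  forall i j : nat -> nat, in_Sigma b i -> in_Sigma b j -> i <> j ->
    exists x, Yfun b lambda phi x j - Yfun b lambda phi x i <> 0.

Definition in_F1 (b : nat) (lambda : R) (phi : R -> R) (f : R -> R) : Prop :=
  exists u v : nat -> nat, in_Sigma b u /\ in_Sigma b v /\ u 0%nat <> v 0%nat /\
    forall x, f x = Gammafun b lambda phi u x - Gammafun b lambda phi v x.

(** Write Y_j = Y(., j) and D_k(j, x) for its k-th x-derivative, so that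
  every f = Gamma_u - Gamma_v in F_1 satisfies f^(k+1) = D_k(u,.) - D_k(v,.).
  The theorem is proved by contradiction through a compactness argument.

  - Since phi is analytic and 1-periodic, |phi^(k)| <= A k! L^k on all of R
    (Cauchy estimates near each point, then compactness of [0,1]).
  - Hence D_k(j, x) is given by a geometrically dominated series, is
    differentiable in x with derivative D_(k+1), is bounded by C (k+1)! L^k,
    and is uniformly continuous in (j, x) for the product topology.
  - If no (eps1, Q1) works, there are pairs (u, v, x), u_1 <> v_1, on which
    either D_0(u) - D_0(v) is uniformly 1/m-small on [0,1], or its first m
    derivatives are 1/m-small at x.  Compactness of Sigma x Sigma x [0,1]
    (a Koenig-lemma argument) and continuity yield a limit pair (u, v) for
    which all derivatives of G = Y_u - Y_v vanish at one point.
  - A function whose derivatives satisfy |G^(j)| <= K (j+1)! L^j is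
    determined by its jet at one point (Taylor with Lagrange remainder on
    intervals of fixed length), so G = 0, contradicting condition (H). *)

From Stdlib Require Import Reals.
From Coquelicot Require Import Coquelicot.
From Stdlib Require Import Lra Lia ZArith Ranalysis5 ClassicalEpsilon Classical.
Open Scope R_scope.

Lemma locally_of_ball (y eps : R) (P : R -> Prop) : 0 < eps ->
  (forall t, Rabs (t - y) < eps -> P t) -> locally y P.
Proof. intros He H. exists (mkposreal eps He). intros t Ht. apply H. exact Ht. Qed.

Lemma nat_arch (x : R) : exists n : nat, x < INR n.
Proof.
  destruct (archimed x) as [H1 _].
  destruct (Z_le_gt_dec 0 (up x)) as [Hz|Hz].
  - exists (Z.to_nat (up x)). rewrite INR_IZR_INZ, Z2Nat.id; auto.
  - exists 0%nat. assert (Hz2 : (up x < 0)%Z) by lia. apply IZR_lt in Hz2. simpl. lra.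
Qed.

Lemma pow_le1 x n : 0 <= x <= 1 -> x ^ n <= 1.
Proof.
  intros Hx. induction n as [|n IH]; simpl; [lra|].
  assert (0 <= x ^ n) by (apply pow_le; lra). nra.
Qed.

Lemma half_pow_mono n m : (n <= m)%nat -> (/2) ^ m <= (/2) ^ n.
Proof.
  intros H. replace m with (n + (m - n))%nat by lia. rewrite pow_add.
  pose proof (pow_le (/2) n ltac:(lra)).
  assert ((/2) ^ (m - n) <= 1) by (apply pow_le1; lra).
  assert (0 <= (/2) ^ (m - n)) by (apply pow_le; lra). nra.
Qed.

Lemma inv_succ_mono m m' : (m <= m')%nat -> / INR (S m') <= / INR (S m).
Proof.
  intros H. apply Rinv_le_contravar; [apply lt_0_INR; lia|]. apply le_INR; lia.
Qed.

(** [n + 2 <= 2^(n+1)]: the linear factor in Taylor remainders is harmless. *)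
Lemma two_pow_ge n : INR (S (S n)) <= 2 ^ (S n).
Proof.
  induction n as [|n IH]; [simpl; lra|].
  rewrite S_INR. pose proof (pow_R1_Rle 2 n ltac:(lra)). simpl pow. simpl pow in IH. lra.
Qed.

Lemma zero_of_geom (z c : R) : (forall n, Rabs z <= c * (/2) ^ n) -> z = 0.
Proof.
  intros H. destruct (Req_dec z 0) as [|Hz]; auto. exfalso.
  assert (Hc : 0 <= c) by (specialize (H 0%nat); simpl in H; pose proof (Rabs_pos z); lra).
  assert (Hzp : 0 < Rabs z) by (apply Rabs_pos_lt; auto).
  destruct (pow_lt_1_zero (/2) ltac:(rewrite Rabs_pos_eq; lra) (Rabs z / (c + 1)))
    as [N HN]; [apply Rdiv_lt_0_compat; lra|].
  specialize (HN N (le_n _)). rewrite Rabs_pos_eq in HN by (apply pow_le; lra).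
  specialize (H N).
  assert (c * (/2)^N < Rabs z).
  { apply Rle_lt_trans with ((c + 1) * (/2)^N).
    - pose proof (pow_le (/2) N ltac:(lra)). nra.
    - apply (Rmult_lt_reg_r (/ (c + 1))); [apply Rinv_0_lt_compat; lra|].
      replace ((c + 1) * (/ 2) ^ N * / (c + 1)) with ((/2)^N) by (field; lra). exact HN. }
  lra.
Qed.

Lemma zero_of_inv (z : R) m0 : (forall m, (m0 <= m)%nat -> Rabs z <= / INR (S m)) -> z = 0.
Proof.
  intros H. destruct (Req_dec z 0) as [|Hz]; auto. exfalso.
  assert (Hzp : 0 < Rabs z) by (apply Rabs_pos_lt; auto).
  destruct (nat_arch (/ Rabs z)) as [n Hn].
  specialize (H (Nat.max m0 n) ltac:(lia)).
  assert (INR n <= INR (S (Nat.max m0 n))) by (apply le_INR; lia).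
  assert (Hlt : / INR (S (Nat.max m0 n)) < Rabs z).
  { replace (Rabs z) with (/ / Rabs z) by (field; lra).
    assert (0 < / Rabs z) by (apply Rinv_0_lt_compat; lra).
    apply Rinv_lt_contravar; [|lra]. apply Rmult_lt_0_compat; lra. }
  lra.
Qed.

(** [(n+k)! <= 2^(n+k) n! k!], i.e. binomial coefficients are at most [2^(n+k)]. *)
Lemma fact_add_le_nat s : forall n k, (n + k = s)%nat ->
  (fact (n + k) <= 2 ^ (n + k) * fact n * fact k)%nat.
Proof.
  induction s as [|s IH]; intros n k Hs.
  - assert (n = 0 /\ k = 0)%nat as [-> ->] by lia. simpl. lia.
  - assert (Hp : forall e, (1 <= 2 ^ e)%nat) by (intros e; apply Nat.pow_le_mono_r with (a := 2%nat) (b := 0%nat); lia).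
    destruct n as [|n']; [simpl; specialize (Hp k); nia|].
    destruct k as [|k']; [rewrite Nat.add_0_r; simpl fact at 3; specialize (Hp (S n')); nia|].
    assert (H1 := IH n' (S k') ltac:(lia)).
    assert (H2 := IH (S n') k' ltac:(lia)).
    replace (S n' + S k')%nat with (S (n' + S k')) by lia.
    replace (S n' + k')%nat with (n' + S k')%nat in H2 by lia.
    rewrite Nat.pow_succ_r'.
    change (fact (S (n' + S k'))) with (S (n' + S k') * fact (n' + S k'))%nat.
    change (fact (S n')) with (S n' * fact n')%nat in *.
    change (fact (S k')) with (S k' * fact k')%nat in *.
    set (F := fact (n' + S k')) in *. set (P := (2 ^ (n' + S k'))%nat) in *.
    replace (S (n' + S k')) with (S n' + S k')%nat by lia.
    nia.
Qed.

Lemma fact_add_le n k :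
  INR (fact (n + k)) <= 2 ^ (n + k) * INR (fact n) * INR (fact k).
Proof.
  pose proof (fact_add_le_nat (n + k) n k eq_refl) as H.
  apply le_INR in H. rewrite !mult_INR, pow_INR in H. simpl in H. exact H.
Qed.

Lemma lim0_bounded (u : nat -> R) : is_lim_seq u 0 -> exists M, forall n, Rabs (u n) <= M.
Proof.
  intros H. apply is_lim_seq_Reals in H.
  destruct (H 1 Rlt_0_1) as [N HN].
  exists (1 + sum_f_R0 (fun k => Rabs (u k)) N). intros n.
  assert (Hs : forall m, 0 <= sum_f_R0 (fun k => Rabs (u k)) m).
  { intros m; apply cond_pos_sum; intros; apply Rabs_pos. }
  destruct (Compare_dec.le_lt_dec n N) as [Hn|Hn].
  - assert (Hterm : forall m, (n <= m)%nat -> Rabs (u n) <= sum_f_R0 (fun k => Rabs (u k)) m).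
    { induction m as [|m IHm]; intros Hm.
      - assert (n = 0%nat) by lia. subst; simpl; lra.
      - destruct (Nat.eq_dec n (S m)) as [->|Hne].
        + simpl. specialize (Hs m). lra.
        + simpl. specialize (IHm ltac:(lia)). pose proof (Rabs_pos (u (S m))). lra. }
    specialize (Hterm N Hn). lra.
  - specialize (HN n ltac:(lia)). unfold R_dist in HN. rewrite Rminus_0_r in HN.
    specialize (Hs N). lra.
Qed.

Lemma geom_is (M q : R) : 0 <= q < 1 -> is_series (fun m => M * q ^ m) (M / (1 - q)).
Proof.
  intros Hq. apply (is_series_scal_l M (fun n => q ^ n) (/(1 - q))).
  apply is_series_geom. rewrite Rabs_pos_eq; lra.
Qed.

Lemma dom_ex (a : nat -> R) M q : 0 <= q < 1 -> (forall m, Rabs (a m) <= M * q ^ m) -> ex_series a.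
Proof.
  intros Hq H. apply (ex_series_le a (fun m => M * q ^ m)).
  - intros n. apply H.
  - eexists; apply geom_is; auto.
Qed.

Lemma dom_bound (a : nat -> R) M q : 0 <= q < 1 -> (forall m, Rabs (a m) <= M * q ^ m) ->
  Rabs (Series a) <= M / (1 - q).
Proof.
  intros Hq H. eapply Rle_trans.
  - apply Series_Rabs. apply (dom_ex _ M q); auto. intros m. rewrite Rabs_Rabsolu. apply H.
  - rewrite <- (is_series_unique _ _ (geom_is M q Hq)). apply Series_le.
    + intros n; split; [apply Rabs_pos|apply H].
    + eexists; apply geom_is; auto.
Qed.

Lemma dom_tail (a : nat -> R) M q n : 0 <= q < 1 -> (forall m, Rabs (a m) <= M * q ^ m) ->
  Rabs (Series a - sum_f_R0 a n) <= M * q ^ (S n) / (1 - q).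
Proof.
  intros Hq H. rewrite (Series_incr_n a (S n)); [|lia|apply (dom_ex _ M q); auto].
  simpl pred. replace (sum_f_R0 a n + Series (fun k => a (S n + k)%nat) - sum_f_R0 a n)
    with (Series (fun k => a (S n + k)%nat)) by ring.
  apply (dom_bound _ (M * q ^ S n)); auto.
  intros m. rewrite Rmult_assoc, <- pow_add. apply H.
Qed.

Lemma partial_geom_bound (d : nat -> R) c q n : 0 <= q < 1 -> 0 <= c ->
  (forall m, (m <= n)%nat -> Rabs (d m) <= c * q ^ m) ->
  Rabs (sum_f_R0 d n) <= c / (1 - q).
Proof.
  intros Hq Hc H.
  eapply Rle_trans; [apply sum_f_R0_triangle|].
  apply Rle_trans with (sum_f_R0 (fun m => c * q ^ m) n); [apply sum_Rle; auto|].
  replace (sum_f_R0 (fun m => c * q ^ m) n) with (c * sum_f_R0 (fun m => q ^ m) n)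
    by (rewrite scal_sum; apply sum_eq; intros; ring).
  rewrite tech3 by lra. unfold Rdiv.
  assert (0 <= q ^ S n) by (apply pow_le; lra).
  assert (0 < / (1 - q)) by (apply Rinv_0_lt_compat; lra).
  assert (0 <= c * / (1 - q) * q ^ S n) by (apply Rmult_le_pos; [apply Rmult_le_pos|]; lra).
  nra.
Qed.

Lemma Un_cv_series (a : nat -> R) : ex_series a -> Un_cv (sum_f_R0 a) (Series a).
Proof.
  intros H. apply is_lim_seq_Reals. apply Series_correct in H.
  apply (is_lim_seq_ext (sum_n a)); [intros; apply sum_n_Reals|exact H].
Qed.

(** ** Compactness of Sigma x Sigma x [0,1]

  A nested sequence [S m] of nonempty subsets of Sigma_b x Sigma_b x [0,1]
  has a cluster point: every cylinder (prefixes of length [n], interval of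
  length [2^-n]) around it meets every [S m].  The point is built digit by
  digit (Koenig's lemma): a node of depth [n] is a pair of length-[n]
  prefixes with a dyadic interval, and it is "good" if its cylinder meets
  every [S m]; a good node always has a good child, because it has finitely
  many children and the [S m] are nested. *)

Lemma eventually_all_below (Q : nat -> nat -> Prop) (n : nat) :
  (forall d, (d < n)%nat -> exists m0, forall m, (m0 <= m)%nat -> Q d m) ->
  exists M, forall d, (d < n)%nat -> forall m, (M <= m)%nat -> Q d m.
Proof.
  induction n as [|n IH]; intros H.
  - exists 0%nat; intros; lia.
  - destruct IH as [M1 HM1]. { intros d Hd; apply H; lia. }
    destruct (H n) as [M2 HM2]; [lia|].
    exists (Nat.max M1 M2); intros d Hd m Hm.
    destruct (Nat.eq_dec d n) as [->|Hne]; [apply HM2|apply HM1]; lia.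
Qed.

Definition upd (U : nat -> nat) (n d : nat) : nat -> nat :=
  fun k => if Nat.eq_dec k n then d else U k.

Section Compactness.
Variable b : nat.
Variable S : nat -> (nat -> nat) -> (nat -> nat) -> R -> Prop.
Hypothesis S_nested : forall m m' u v x, (m <= m')%nat -> S m' u v x -> S m u v x.
Hypothesis S_nonempty :
  forall m, exists u v x, in_Sigma b u /\ in_Sigma b v /\ 0 <= x <= 1 /\ S m u v x.

(** A node: two digit sequences (only a prefix is relevant) and the left
    end of a dyadic interval. *)
Definition node := ((nat -> nat) * (nat -> nat) * R)%type.
Definition nU (st : node) := fst (fst st).
Definition nV (st : node) := snd (fst st).
Definition nA (st : node) := snd st.

Definition meets m n (st : node) :=
  exists u v x, in_Sigma b u /\ in_Sigma b v /\ 0 <= x <= 1 /\ S m u v x /\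
    (forall k, (k < n)%nat -> u k = nU st k /\ v k = nV st k) /\
    nA st <= x <= nA st + (/2)^n.

Definition good n st := forall m, meets m n st.

Definition child n (st st' : node) :=
  (forall k, k <> n -> nU st' k = nU st k /\ nV st' k = nV st k) /\
  (nU st' n < b)%nat /\ (nV st' n < b)%nat /\
  (nA st' = nA st \/ nA st' = nA st + (/2)^(Datatypes.S n)).

Lemma meets_mono m m' n st : (m <= m')%nat -> meets m' n st -> meets m n st.
Proof.
  intros Hm (u & v & x & H1 & H2 & H3 & H4 & H5 & H6).
  exists u, v, x; repeat split; try tauto; eauto; apply H5; auto.
Qed.

Lemma good_child n st : good n st -> exists st', child n st st' /\ good (Datatypes.S n) st'.
Proof.
  intros HG. apply NNPP; intros Hn.
  set (ch := fun d e h : nat => (upd (nU st) n d, upd (nV st) n e,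
                                  nA st + INR h * (/2)^(Datatypes.S n)) : node).
  (* every child fails to meet [S m] for [m] large *)
  assert (Hbad : forall d e h, (d < b)%nat -> (e < b)%nat -> (h < 2)%nat ->
            exists m0, forall m, (m0 <= m)%nat -> ~ meets m (Datatypes.S n) (ch d e h)).
  { intros d e h Hd He Hh.
    assert (~ good (Datatypes.S n) (ch d e h)).
    { intros HG'. apply Hn. exists (ch d e h); split; auto.
      unfold child, ch, nU, nV, nA, upd; simpl. repeat split.
      1-4: destruct (Nat.eq_dec _ n); congruence.
      destruct h as [|[|h]]; [left; simpl; ring | right; simpl; ring | lia]. }
    apply not_all_ex_not in H as [m0 Hm0]. exists m0.
    intros m Hm HP. apply Hm0. eapply meets_mono; eauto. }
  destruct (eventually_all_below (fun d m => forall e h, (e < b)%nat -> (h < 2)%nat ->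
                        ~ meets m (Datatypes.S n) (ch d e h)) b) as [M HM].
  { intros d Hd.
    destruct (eventually_all_below
                (fun e m => forall h, (h < 2)%nat -> ~ meets m (Datatypes.S n) (ch d e h)) b)
      as [M1 HM1].
    { intros e He.
      destruct (eventually_all_below (fun h m => ~ meets m (Datatypes.S n) (ch d e h)) 2)
        as [M2 HM2]; [intros h Hh; apply Hbad; auto|].
      exists M2; intros m Hm h Hh; apply HM2; auto. }
    exists M1; intros m Hm e h He Hh; apply HM1; auto. }
  (* but the witness for [S M] lies in one of the children *)
  destruct (HG M) as (u & v & x & Hu & Hv & Hx & HS & Hpre & Hint).
  set (h := if Rle_dec (nA st + (/2)^(Datatypes.S n)) x then 1%nat else 0%nat).
  apply (HM (u n) (Hu n) M (le_n _) (v n) h (Hv n)); [unfold h; destruct Rle_dec; lia|].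
  exists u, v, x; repeat split; try tauto.
  1,2: unfold ch, nU, nV, upd; simpl; destruct (Nat.eq_dec k n) as [->|]; auto; apply Hpre; lia.
  all: unfold ch, nA, h in *; simpl in *;
       destruct Rle_dec as [Hr|Hr]; [|apply Rnot_le_lt in Hr]; simpl; lra.
Qed.

Definition next_node n (st : node) : node :=
  epsilon (inhabits st) (fun st' => child n st st' /\ good (Datatypes.S n) st').

Fixpoint branch n : node :=
  match n with
  | O => (fun _ => 0%nat, fun _ => 0%nat, 0)
  | Datatypes.S n => next_node n (branch n)
  end.

Lemma branch_good_child n : good n (branch n) ->
  child n (branch n) (branch (Datatypes.S n)) /\ good (Datatypes.S n) (branch (Datatypes.S n)).
Proof.
  intros HG. apply (epsilon_spec (inhabits (branch n))
    (fun st' => child n (branch n) st' /\ good (Datatypes.S n) st')), good_child, HG.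
Qed.

Lemma branch_good n : good n (branch n).
Proof.
  induction n as [|n IH].
  - intros m. destruct (S_nonempty m) as (u & v & x & H1 & H2 & H3 & H4).
    exists u, v, x; repeat split; auto; try lia; unfold nA; simpl; lra.
  - apply branch_good_child, IH.
Qed.

Lemma branch_child n : child n (branch n) (branch (Datatypes.S n)).
Proof. apply branch_good_child, branch_good. Qed.

(** The limit point: digits are frozen once chosen, and the left ends
    [aseq n] increase while [aseq n + 2^-n] decrease. *)
Definition ulim k := nU (branch (Datatypes.S k)) k.
Definition vlim k := nV (branch (Datatypes.S k)) k.
Definition aseq n := nA (branch n).

Lemma branch_prefix n k : (k < n)%nat -> nU (branch n) k = ulim k /\ nV (branch n) k = vlim k.
Proof.
  induction n as [|n IH]; intros Hk; [lia|].
  destruct (Nat.eq_dec k n) as [->|Hne]; [split; reflexivity|].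
  destruct (branch_child n) as [Hc _]. destruct (Hc k Hne) as [E1 E2].
  rewrite E1, E2. apply IH; lia.
Qed.

Lemma aseq_nested n p : aseq n <= aseq (n + p) /\ aseq (n+p) + (/2)^(n+p) <= aseq n + (/2)^n.
Proof.
  induction p as [|p IH]; [rewrite Nat.add_0_r; lra|].
  rewrite Nat.add_succ_r.
  destruct (branch_child (n + p)) as (_ & _ & _ & Ha). unfold aseq in *.
  pose proof (pow_lt (/2) (n + p) ltac:(lra)).
  destruct Ha as [E|E]; rewrite E; simpl; lra.
Qed.

Lemma aseq_ub n m : aseq m <= aseq n + (/2)^n.
Proof.
  destruct (Compare_dec.le_lt_dec n m) as [H|H].
  - replace m with (n + (m - n))%nat by lia.
    pose proof (aseq_nested n (m - n)). pose proof (pow_lt (/2) (n + (m-n)) ltac:(lra)). lra.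
  - replace n with (m + (n - m))%nat by lia.
    pose proof (aseq_nested m (n - m)). pose proof (pow_lt (/2) (m + (n-m)) ltac:(lra)). lra.
Qed.

Lemma nested_cluster_point : exists u v x, in_Sigma b u /\ in_Sigma b v /\ 0 <= x <= 1 /\
  forall m n, exists u' v' x', in_Sigma b u' /\ in_Sigma b v' /\ 0 <= x' <= 1 /\ S m u' v' x' /\
     (forall k, (k < n)%nat -> u' k = u k /\ v' k = v k) /\ Rabs (x' - x) <= (/2)^n.
Proof.
  destruct (completeness (fun y => exists n, y = aseq n)) as [xs [Hub Hlub]].
  { exists (aseq 0 + (/2)^0). intros y [n ->]. apply aseq_ub. }
  { exists (aseq 0); exists 0%nat; auto. }
  assert (Hle : forall n, aseq n <= xs) by (intros n; apply Hub; eauto).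
  assert (Hge : forall n, xs <= aseq n + (/2)^n).
  { intros n; apply Hlub. intros y [m ->]. apply aseq_ub. }
  exists ulim, vlim, xs. repeat split.
  - intros k. apply (branch_child k).
  - intros k. apply (branch_child k).
  - specialize (Hle 0%nat); unfold aseq in Hle; simpl in Hle; lra.
  - specialize (Hge 0%nat); unfold aseq in Hge; simpl in Hge; lra.
  - intros m n. destruct (branch_good n m) as (u & v & x & H1 & H2 & H3 & H4 & H5 & H6).
    exists u, v, x; repeat split; try tauto.
    1,2: destruct (H5 k) as [E1 E2]; [assumption|]; rewrite ?E1, ?E2; apply branch_prefix; auto.
    specialize (Hle n); specialize (Hge n). unfold aseq in *. apply Rabs_le; lra.
Qed.

End Compactness.

Lemma interval_cluster_point (P : nat -> R -> Prop) :
  (forall m m' y, (m <= m')%nat -> P m' y -> P m y) ->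
  (forall m, exists y, 0 <= y <= 1 /\ P m y) ->
  exists y, 0 <= y <= 1 /\ forall m n, exists y', P m y' /\ Rabs (y' - y) <= (/2)^n.
Proof.
  intros Hnest Hne.
  destruct (nested_cluster_point 1 (fun m _ _ y => P m y)) as (u0 & v0 & y & _ & _ & Hy & H).
  - intros m m' _ _ y; apply Hnest.
  - intros m. destruct (Hne m) as (y & Hy & HP).
    exists (fun _ => 0%nat), (fun _ => 0%nat), y; repeat split; try (intros k; lia); tauto.
  - exists y; split; auto. intros m n.
    destruct (H m n) as (u & v & y' & _ & _ & _ & HP & _ & Hd). eauto.
Qed.

(** ** Term-by-term differentiation of geometrically dominated series *)

Section DominatedSeries.
Variables (t : nat -> R -> R) (q M : R).
Hypothesis q_range : 0 <= q < 1.
Hypothesis t_dom : forall m y, Rabs (t m y) <= M * q ^ m.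

(** Weierstrass M-test: the partial sums converge uniformly on every ball. *)
Lemma dominated_series_CVU c r :
  CVU (fun n y => sum_f_R0 (fun m => t m y) n) (fun y => Series (fun m => t m y)) c r.
Proof.
  intros eps Heps.
  assert (HM : 0 <= M)
    by (specialize (t_dom 0%nat c); simpl in t_dom; pose proof (Rabs_pos (t 0%nat c)); lra).
  destruct (pow_lt_1_zero q ltac:(rewrite Rabs_pos_eq; lra) (eps * (1 - q) / (M + 1)))
    as [N HN]; [apply Rdiv_lt_0_compat; [apply Rmult_lt_0_compat|]; lra|].
  exists N. intros n y Hn _.
  eapply Rle_lt_trans; [apply (dom_tail _ M q); auto|].
  specialize (HN (S n) ltac:(lia)). rewrite Rabs_pos_eq in HN by (apply pow_le; lra).
  assert (0 <= q ^ S n) by (apply pow_le; lra).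
  apply (Rmult_lt_reg_r (1 - q)); [lra|]. unfold Rdiv. rewrite Rmult_assoc, Rinv_l by lra.
  apply (Rmult_lt_compat_l (M + 1)) in HN; [|lra].
  replace ((M + 1) * (eps * (1 - q) / (M + 1))) with (eps * (1 - q)) in HN by (field; lra).
  nra.
Qed.

Lemma dominated_series_continuous :
  (forall m y, continuity_pt (t m) y) ->
  forall y, continuity_pt (fun y => Series (fun m => t m y)) y.
Proof.
  intros Hc y.
  apply (CVU_continuity (fun n y => sum_f_R0 (fun m => t m y) n) _ y (mkposreal 1 Rlt_0_1)).
  - apply dominated_series_CVU.
  - intros n z _. induction n as [|n IH]; simpl; [apply Hc|apply continuity_pt_plus; auto].
  - unfold Boule. rewrite Rminus_eq_0, Rabs_R0. simpl. lra.
Qed.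

End DominatedSeries.

Lemma series_deriv (t t' : nat -> R -> R) (q M M' : R) : 0 <= q < 1 ->
  (forall m y, Rabs (t m y) <= M * q ^ m) ->
  (forall m y, Rabs (t' m y) <= M' * q ^ m) ->
  (forall m y, is_derive (t m) y (t' m y)) ->
  (forall m y, continuity_pt (t' m) y) ->
  forall x, is_derive (fun y => Series (fun m => t m y)) x (Series (fun m => t' m x)).
Proof.
  intros Hq Ht Ht' Hd Hc x.
  set (r := mkposreal 1 Rlt_0_1).
  apply is_derive_Reals.
  apply (derivable_pt_lim_CVU (fun n y => sum_f_R0 (fun m => t m y) n)
           (fun n y => sum_f_R0 (fun m => t' m y) n) (fun y => Series (fun m => t m y))
           (fun y => Series (fun m => t' m y)) x x r).
  - unfold Boule; rewrite Rminus_eq_0, Rabs_R0; simpl; lra.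
  - intros y n _. induction n as [|n IH]; simpl; [apply is_derive_Reals, Hd|].
    apply (derivable_pt_lim_plus (fun y => sum_f_R0 (fun m => t m y) n) (t (S n))); auto.
    apply is_derive_Reals, Hd.
  - intros y _. apply Un_cv_series. apply (dom_ex _ M q); auto.
  - apply (dominated_series_CVU t' q M'); auto.
  - intros y _. apply (dominated_series_continuous t' q M'); auto.
Qed.

(** ** A quasi-analytic identity theorem

  Let [G j] be the [j]-th derivative of [G 0] with [|G j| <= K (j+1)! L^j]
  on all of R.  If all derivatives vanish at one point, Taylor's formula
  with Lagrange remainder shows that [G 0] vanishes on intervals of length
  [h = 1/(4(L+1))] to the right of that point; at their midpoints all
  derivatives vanish again, so [G 0] vanishes on the whole half-line, and
  by reflection on all of R. *)

Section Identity.
Variable G : nat -> R -> R.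
Variables K L : R.
Hypothesis K_nonneg : 0 <= K.
Hypothesis L_nonneg : 0 <= L.
Hypothesis G_deriv : forall j y, is_derive (G j) y (G (S j) y).
Hypothesis G_bound : forall j y, Rabs (G j y) <= K * INR (fact (S j)) * L ^ j.

Lemma G_Derive_n j : forall y, Derive_n (G 0) j y = G j y.
Proof.
  induction j as [|j IH]; intros y; [reflexivity|].
  simpl. rewrite (Derive_ext _ _ _ IH). apply is_derive_unique, G_deriv.
Qed.

Lemma G_ex_derive_n j y : ex_derive_n (G 0) j y.
Proof.
  destruct j as [|j]; [exact I|]. simpl.
  apply (ex_derive_ext (G j)); [intros; symmetry; apply G_Derive_n|].
  eexists; apply G_deriv.
Qed.

(** Taylor at a point of vanishing jet: only the Lagrange remainder is left. *)
Lemma flat_taylor_bound x0 y n : (forall j, G j x0 = 0) -> x0 < y ->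
  Rabs (G 0 y) <= K * INR (S (S n)) * ((y - x0) * L) ^ S n.
Proof.
  intros H0 Hy.
  destruct (Taylor_Lagrange (G 0) n x0 y Hy) as (zeta & Hz & Heq);
    [intros; apply G_ex_derive_n|].
  rewrite Heq, (sum_eq_R0 _ n); [|intros m _; rewrite G_Derive_n, H0; ring].
  rewrite Rplus_0_l, G_Derive_n.
  pose proof (G_bound (S n) zeta) as Hb.
  pose proof (lt_0_INR _ (lt_O_fact (S n))) as Hf.
  replace (INR (fact (S (S n)))) with (INR (S (S n)) * INR (fact (S n))) in Hb
    by (rewrite <- mult_INR; reflexivity).
  assert (0 <= (y - x0) ^ S n) by (apply pow_le; lra).
  unfold Rdiv. rewrite !Rabs_mult, Rabs_pos_eq, (Rabs_pos_eq (/ _))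
    by (try apply Rlt_le, Rinv_0_lt_compat; lra).
  apply Rle_trans with ((y - x0) ^ S n * / INR (fact (S n)) *
                         (K * (INR (S (S n)) * INR (fact (S n))) * L ^ S n)).
  - apply Rmult_le_compat_l; auto. apply Rmult_le_pos; auto. apply Rlt_le, Rinv_0_lt_compat; lra.
  - apply Req_le. rewrite Rpow_mult_distr. field. lra.
Qed.

(** The step length [h = 1/(4(L+1))], for which [hL <= 1/4]. *)
Definition hstep := / (4 * (L + 1)).

Lemma hstep_pos : 0 < hstep.
Proof. unfold hstep. apply Rinv_0_lt_compat; lra. Qed.

Lemma hstep_L : hstep * L <= /4.
Proof.
  unfold hstep. apply (Rmult_le_reg_l (4 * (L + 1))); [lra|].
  rewrite <- Rmult_assoc, Rinv_r by lra. lra.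
Qed.

(** With [(y - x0) L <= 1/4] the remainder is [O(2^-n)], so [G 0] vanishes on
    [(x0, x0 + h]]. *)
Lemma flat_step_right x0 : (forall j, G j x0 = 0) -> forall y, x0 < y <= x0 + hstep -> G 0 y = 0.
Proof.
  intros H0 y Hy. pose proof hstep_pos. pose proof hstep_L.
  apply (zero_of_geom _ (2 * K)). intros n.
  eapply Rle_trans; [apply (flat_taylor_bound x0 y n); auto; lra|].
  assert (Hq : ((y - x0) * L) ^ S n <= ((/2) ^ S n) * (/2) ^ S n).
  { rewrite <- Rpow_mult_distr. apply pow_incr. nra. }
  assert (E : 2 ^ S n * (/2) ^ S n = 1)
    by (rewrite <- Rpow_mult_distr; replace (2 * /2) with 1 by lra; apply pow1).
  pose proof (two_pow_ge n). pose proof (pos_INR (S (S n))).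
  assert (0 <= (/2) ^ S n) by (apply pow_le; lra).
  assert (0 <= ((y - x0) * L) ^ S n) by (apply pow_le; nra).
  assert (Hsn : (/2) ^ S n <= (/2) ^ n) by (apply half_pow_mono; lia).
  apply Rle_trans with (K * 2 ^ S n * ((/2) ^ S n * (/2) ^ S n)).
  - rewrite !Rmult_assoc. apply Rmult_le_compat_l; auto. apply Rmult_le_compat; auto.
  - replace (K * 2 ^ S n * ((/ 2) ^ S n * (/ 2) ^ S n))
      with (K * (2 ^ S n * (/2) ^ S n) * (/2) ^ S n) by ring.
    rewrite E. nra.
Qed.

Lemma flat_jet_shift x0 : (forall j, G j x0 = 0) -> forall j, G j (x0 + hstep / 2) = 0.
Proof.
  intros H0 j. pose proof hstep_pos.
  rewrite <- G_Derive_n, (Derive_n_ext_loc (G 0) (fun _ => 0)).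
  - destruct j; [reflexivity|]. apply Derive_n_const.
  - apply (locally_of_ball _ (hstep / 2)); [lra|]. intros t Ht. apply Rabs_lt_between in Ht.
    apply (flat_step_right x0); auto; lra.
Qed.

Lemma flat_right x0 : (forall j, G j x0 = 0) -> forall y, x0 <= y -> G 0 y = 0.
Proof.
  intros H0. pose proof hstep_pos.
  assert (Hind : forall n, (forall j, G j (x0 + INR n * (hstep / 2)) = 0) /\
             forall y, x0 <= y <= x0 + INR n * (hstep / 2) -> G 0 y = 0).
  { induction n as [|n [IH1 IH2]].
    - simpl. rewrite Rmult_0_l, Rplus_0_r. split; auto. intros y Hy.
      replace y with x0 by lra. apply H0.
    - rewrite S_INR. split.
      + replace (x0 + (INR n + 1) * (hstep / 2)) with ((x0 + INR n * (hstep / 2)) + hstep / 2)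
          by ring.
        apply flat_jet_shift; auto.
      + intros y Hy. destruct (Rle_dec y (x0 + INR n * (hstep / 2))) as [Hle|Hlt];
          [apply IH2; lra|apply (flat_step_right (x0 + INR n * (hstep / 2))); auto; lra]. }
  intros y Hy.
  destruct (nat_arch ((y - x0) / (hstep / 2))) as [n Hn].
  apply (proj2 (Hind n)). split; auto.
  apply (Rmult_lt_compat_r (hstep / 2)) in Hn; [|lra].
  unfold Rdiv in Hn. rewrite Rmult_assoc, Rinv_l in Hn by lra. lra.
Qed.

End Identity.

Lemma identity_theorem (G : nat -> R -> R) K L : 0 <= K -> 0 <= L ->
  (forall j y, is_derive (G j) y (G (S j) y)) ->
  (forall j y, Rabs (G j y) <= K * INR (fact (S j)) * L ^ j) ->
  forall x0, (forall j, G j x0 = 0) -> forall y, G O y = 0.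
Proof.
  intros HK HL Hd Hb x0 H0 y.
  destruct (Rle_dec x0 y) as [Hle|Hlt]; [exact (flat_right G K L HK HL Hd Hb x0 H0 y Hle)|].
  (* reflect: H j t = (-1)^j G j (-t) satisfies the same hypotheses *)
  set (H := fun j t => (-1) ^ j * G j (- t)).
  assert (HHd : forall j t, is_derive (H j) t (H (S j) t)).
  { intros j t. unfold H.
    replace ((-1) ^ S j * G (S j) (- t)) with ((-1) ^ j * (-1 * G (S j) (- t))) by (simpl; ring).
    apply (is_derive_scal (fun t => G j (- t))).
    apply (is_derive_comp (G j) Ropp t (G (S j) (- t)) (-1)); [apply Hd|].
    assert (E : is_derive (fun x : R => - x) t (-1)) by (auto_derive; auto; ring). exact E. }
  assert (HHb : forall j t, Rabs (H j t) <= K * INR (fact (S j)) * L ^ j).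
  { intros j t. unfold H. rewrite Rabs_mult, <- RPow_abs, Rabs_m1, pow1, Rmult_1_l. apply Hb. }
  assert (HH0 : forall j, H j (- x0) = 0).
  { intros j. unfold H. rewrite Ropp_involutive, H0. ring. }
  pose proof (flat_right H K L HK HL HHd HHb (- x0) HH0 (- y) ltac:(lra)) as E.
  unfold H in E. simpl in E. rewrite Ropp_involutive in E. lra.
Qed.

(** ** Cauchy estimates for the derivatives of phi *)

Lemma PS_derive_n_term_bound (a : nat -> R) rho M k n z :
  0 < rho -> (forall n, Rabs (a n) * rho ^ n <= M) -> Rabs z <= rho / 4 ->
  Rabs (PS_derive_n k a n * z ^ n) <= (M * INR (fact k) * (2 / rho) ^ k) * (/2) ^ n.
Proof.
  intros Hrho Hb Hz.
  pose proof (lt_0_INR _ (lt_O_fact n)) as Hfn.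
  pose proof (lt_0_INR _ (lt_O_fact k)) as Hfk.
  assert (Hrn : 0 < rho ^ (n + k)) by (apply pow_lt; lra).
  assert (Ha : Rabs (a (n + k)%nat) <= M / rho ^ (n + k)) by (apply Rle_div_r; auto).
  assert (Hc : INR (fact (n + k)) / INR (fact n) <= 2 ^ (n + k) * INR (fact k)).
  { apply Rle_div_l; auto. pose proof (fact_add_le n k). lra. }
  assert (Hzn : Rabs z ^ n <= (rho / 4) ^ n) by (apply pow_incr; split; [apply Rabs_pos|lra]).
  unfold PS_derive_n. rewrite !Rabs_mult, <- RPow_abs.
  rewrite (Rabs_pos_eq (_ / _))
    by (apply Rlt_le, Rdiv_lt_0_compat; auto; apply lt_0_INR, lt_O_fact).
  apply Rle_trans with (2 ^ (n + k) * INR (fact k) * (M / rho ^ (n + k)) * (rho / 4) ^ n).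
  - assert (0 <= INR (fact (n + k)) / INR (fact n))
      by (apply Rlt_le, Rdiv_lt_0_compat; auto; apply lt_0_INR, lt_O_fact).
    pose proof (Rabs_pos (a (n + k)%nat)). pose proof (pow_le _ n (Rabs_pos z)).
    apply Rmult_le_compat; [nra|auto| |auto].
    apply Rmult_le_compat; auto.
  - apply Req_le.
    assert (E4 : (rho / 4) ^ n = rho ^ n * ((/2) ^ n * (/2) ^ n))
      by (rewrite <- !Rpow_mult_distr; f_equal; field).
    assert (E2 : 2 ^ n = / (/2) ^ n) by (rewrite pow_inv, Rinv_inv; reflexivity).
    assert (E3 : (2 / rho) ^ k = 2 ^ k / rho ^ k)
      by (unfold Rdiv; rewrite Rpow_mult_distr, pow_inv; reflexivity).
    assert (0 < rho ^ n) by (apply pow_lt; lra).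
    assert (0 < rho ^ k) by (apply pow_lt; lra).
    assert (0 < (/2) ^ n) by (apply pow_lt; lra).
    rewrite E4, E3, !pow_add, E2. field. lra.
Qed.

Section Analytic.
Variable phi : R -> R.
Hypothesis phi_analytic : real_analytic phi.

Lemma phi_local (x0 : R) : exists a rho M, 0 < rho /\
   Rbar_le rho (CV_radius a) /\
   (forall n, Rabs (a n) * rho ^ n <= M) /\
   (forall k y, Rabs (y - x0) < rho -> Derive_n phi k y = PSeries (PS_derive_n k a) (y - x0)).
Proof.
  destruct (phi_analytic x0) as (a & r & Hr & Hps).
  set (rho := r / 2).
  assert (Hex : ex_series (fun n => scal (pow_n rho n) (a n))).
  { assert (H : Rabs ((x0 + rho) - x0) < r)
      by (replace (x0 + rho - x0) with rho by ring; unfold rho; rewrite Rabs_pos_eq; lra).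
    apply Hps in H. replace (x0 + rho - x0) with rho in H by ring.
    exists (phi (x0 + rho)). exact H. }
  destruct (lim0_bounded _ (ex_series_lim_0 _ Hex)) as [M HM].
  assert (HM' : forall n, Rabs (a n) * rho ^ n <= M).
  { intros n. specialize (HM n). rewrite pow_n_pow in HM.
    unfold scal in HM; simpl in HM; unfold mult in HM; simpl in HM.
    rewrite Rabs_mult, (Rabs_pos_eq (rho ^ n)) in HM by (apply pow_le; unfold rho; lra). lra. }
  assert (Hrad : Rbar_le rho (CV_radius a)).
  { apply (proj1 (CV_radius_bounded a)). exists M. intros n.
    rewrite Rabs_mult, (Rabs_pos_eq (rho ^ n)); [apply HM'|apply pow_le; unfold rho; lra]. }
  exists a, rho, M. repeat split; auto; [unfold rho; lra|].
  intros k y Hy.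
  rewrite (Derive_n_ext_loc phi (fun t => PSeries a (t + - x0))).
  - rewrite Derive_n_comp_trans. apply Derive_n_PSeries.
    eapply Rbar_lt_le_trans; [|exact Hrad]. simpl. exact Hy.
  - apply (locally_of_ball y (rho - Rabs (y - x0))); [lra|].
    intros t Ht. symmetry. apply is_pseries_unique. apply Hps.
    pose proof (Rabs_triang (t - y) (y - x0)).
    replace (t - y + (y - x0)) with (t - x0) in H by ring.
    unfold rho in *. lra.
Qed.

Lemma phi_smooth k y : ex_derive (Derive_n phi k) y.
Proof.
  destruct (phi_local y) as (a & rho & M & Hrho & Hrad & _ & Hrep).
  apply (ex_derive_ext_loc (fun t => PSeries (PS_derive_n k a) (t + - y))).
  - apply (locally_of_ball y rho); [exact Hrho|]. intros t Ht. now rewrite Hrep.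
  - apply (ex_derive_comp (PSeries (PS_derive_n k a)) (fun t => t + - y)).
    + apply ex_derive_PSeries. rewrite CV_radius_derive_n.
      replace (y + - y) with 0 by ring. rewrite Rabs_R0.
      eapply Rbar_lt_le_trans; [|exact Hrad]. simpl. exact Hrho.
    + auto_derive; auto.
Qed.

Lemma phi_deriv k y : is_derive (Derive_n phi k) y (Derive_n phi (S k) y).
Proof. apply Derive_correct, phi_smooth. Qed.

Lemma phi_local_bound (x0 : R) : exists delta A L, 0 < delta /\ 0 <= A /\ 0 <= L /\
  forall y, Rabs (y - x0) < delta -> forall k, Rabs (Derive_n phi k y) <= A * INR (fact k) * L ^ k.
Proof.
  destruct (phi_local x0) as (a & rho & M & Hrho & Hrad & Hb & Hrep).
  assert (HM : 0 <= M)
    by (specialize (Hb 0%nat); pose proof (Rabs_pos (a 0%nat)); simpl in Hb; lra).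
  exists (rho / 4), (2 * M), (2 / rho). repeat split; try lra.
  { apply Rlt_le, Rdiv_lt_0_compat; lra. }
  intros y Hy k. rewrite Hrep by lra.
  eapply Rle_trans.
  { apply (dom_bound _ (M * INR (fact k) * (2 / rho) ^ k) (/2)); [lra|].
    intros n. apply (PS_derive_n_term_bound a rho); auto; lra. }
  apply Req_le. field.
Qed.

(** By compactness of [0,1], one estimate holds on all of [0,1]. *)
Lemma phi_bound01 : exists A L, 0 <= A /\ 0 <= L /\ forall y, 0 <= y <= 1 ->
   forall k, Rabs (Derive_n phi k y) <= A * INR (fact k) * L ^ k.
Proof.
  apply NNPP; intros Hn.
  set (P := fun (m : nat) (y : R) =>
     exists k, INR m * INR (fact k) * INR m ^ k < Rabs (Derive_n phi k y)).
  assert (Hmono : forall A L m f k, 0 <= A <= m -> 0 <= L <= m -> 0 < f ->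
                    A * f * L ^ k <= m * f * m ^ k).
  { intros A L m f k HA HL Hf.
    assert (0 <= L ^ k) by (apply pow_le; lra).
    assert (L ^ k <= m ^ k) by (apply pow_incr; lra).
    apply Rmult_le_compat; try nra. }
  destruct (interval_cluster_point P) as (ys & Hys & Happ).
  { intros m m' y Hm [k Hk]. exists k. eapply Rle_lt_trans; [|exact Hk].
    apply le_INR in Hm. pose proof (pos_INR m). pose proof (lt_0_INR _ (lt_O_fact k)).
    apply Hmono; lra. }
  { intros m. apply NNPP; intro H. apply Hn. exists (INR m), (INR m).
    split; [apply pos_INR|]; split; [apply pos_INR|]. intros y Hy k. apply Rnot_lt_le. intros Hlt.
    apply H. exists y. split; auto. exists k; exact Hlt. }
  destruct (phi_local_bound ys) as (delta & A & L & Hd & HA & HL & Hb).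
  destruct (nat_arch (Rmax A L)) as [m Hm].
  destruct (pow_lt_1_zero (/2) ltac:(rewrite Rabs_pos_eq; lra) delta Hd) as [N HN].
  destruct (Happ m N) as (y' & [k Hk] & Hy').
  specialize (HN N (le_n _)). rewrite Rabs_pos_eq in HN by (apply pow_le; lra).
  specialize (Hb y' ltac:(lra) k).
  pose proof (Rmax_l A L). pose proof (Rmax_r A L).
  pose proof (lt_0_INR _ (lt_O_fact k)).
  assert (A * INR (fact k) * L ^ k <= INR m * INR (fact k) * INR m ^ k) by (apply Hmono; lra).
  lra.
Qed.

Hypothesis phi_periodic : Z_periodic phi.

Lemma Derive_n_phi_periodic_nat k y (n : nat) : Derive_n phi k (y + INR n) = Derive_n phi k y.
Proof.
  induction n as [|n IH]; [simpl; now rewrite Rplus_0_r|].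
  rewrite S_INR, <- Rplus_assoc, <- Derive_n_comp_trans, <- IH.
  apply Derive_n_ext. intros t. apply phi_periodic.
Qed.

Lemma Derive_n_phi_periodic k y (z : Z) : Derive_n phi k (y + IZR z) = Derive_n phi k y.
Proof.
  destruct (Z_le_gt_dec 0 z) as [Hz|Hz].
  - replace (IZR z) with (INR (Z.to_nat z)) by (rewrite INR_IZR_INZ, Z2Nat.id; auto).
    apply Derive_n_phi_periodic_nat.
  - replace z with (- Z.of_nat (Z.to_nat (- z)))%Z by lia.
    rewrite opp_IZR, <- INR_IZR_INZ.
    rewrite <- (Derive_n_phi_periodic_nat k (y + - INR (Z.to_nat (- z))) (Z.to_nat (- z))).
    f_equal. ring.
Qed.

Lemma phi_bound : exists A L, 0 <= A /\ 0 <= L /\ forall y k,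
   Rabs (Derive_n phi k y) <= A * INR (fact k) * L ^ k.
Proof.
  destruct phi_bound01 as (A & L & HA & HL & H). exists A, L; repeat split; auto.
  intros y k. replace y with (frac_part y + IZR (Int_part y)) by (unfold frac_part; ring).
  rewrite Derive_n_phi_periodic. apply H. destruct (base_fp y). lra.
Qed.

End Analytic.

(** ** The derivatives of Y as series

  With [gamma = 1/(b lambda)] and the argument [arg_n b s x m] of the
  [m]-th term, the [k]-th derivative of [Y(., s)] is
  [D k s x = - sum_m gamma^(m+1) b^(-(m+1)k) phi^(k+1)(arg_n b s x m)]. *)

Section Transversality.
Variables (b : nat) (lambda : R) (phi : R -> R).
Hypothesis b_ge2 : (2 <= b)%nat.
Hypothesis lambda_gt : / INR b < lambda.
Variables A L : R.
Hypothesis A_nonneg : 0 <= A.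
Hypothesis L_nonneg : 0 <= L.
Hypothesis phi_bound : forall y k, Rabs (Derive_n phi k y) <= A * INR (fact k) * L ^ k.
Hypothesis phi_deriv : forall k y, is_derive (Derive_n phi k) y (Derive_n phi (S k) y).

Definition gam := / (INR b * lambda).

Definition Dterm k s x m :=
  gam ^ (S m) * (/ INR b ^ S m) ^ k * Derive_n phi (S k) (arg_n b s x m).

Definition D k s x := - Series (fun m => Dterm k s x m).

Lemma Yfun_D0 x s : Yfun b lambda phi x s = D 0 s x.
Proof.
  unfold Yfun, D. f_equal. apply Series_ext. intros m.
  unfold Dterm, gam. rewrite pow_O, Rmult_1_r. reflexivity.
Qed.

Lemma INR_b_ge2 : 2 <= INR b.
Proof. apply le_INR in b_ge2. simpl in b_ge2. lra. Qed.

Lemma gam_range : 0 < gam < 1.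
Proof.
  pose proof INR_b_ge2. unfold gam.
  assert (1 < INR b * lambda).
  { apply (Rmult_lt_compat_l (INR b)) in lambda_gt; [|lra].
    rewrite Rinv_r in lambda_gt by lra. lra. }
  split; [apply Rinv_0_lt_compat; lra|].
  rewrite <- Rinv_1. apply Rinv_lt_contravar; lra.
Qed.

Lemma inv_b_pow_range m : 0 < / INR b ^ m <= 1.
Proof.
  pose proof INR_b_ge2. split.
  - apply Rinv_0_lt_compat, pow_lt; lra.
  - rewrite <- Rinv_1. apply Rinv_le_contravar; [lra|]. apply pow_R1_Rle. lra.
Qed.

Lemma Dterm_coef_bound k m : 0 <= gam ^ S m * (/ INR b ^ S m) ^ k <= gam * gam ^ m.
Proof.
  pose proof gam_range. pose proof (inv_b_pow_range (S m)).
  assert ((/ INR b ^ S m) ^ k <= 1) by (apply pow_le1; lra).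
  assert (0 <= (/ INR b ^ S m) ^ k) by (apply pow_le; lra).
  assert (0 <= gam ^ m) by (apply pow_le; lra).
  replace (gam ^ S m) with (gam * gam ^ m) by reflexivity.
  set (c := (/ INR b ^ S m) ^ k) in *.
  assert (0 <= gam * gam ^ m) by (apply Rmult_le_pos; lra). split; nra.
Qed.

Definition Mk k := A * INR (fact (S k)) * L ^ (S k) * gam.

Lemma Mk_nonneg k : 0 <= Mk k.
Proof.
  unfold Mk. pose proof gam_range. pose proof (pos_INR (fact (S k))).
  pose proof (pow_le L (S k) L_nonneg).
  apply Rmult_le_pos; [|lra]. apply Rmult_le_pos; [|lra]. apply Rmult_le_pos; lra.
Qed.

Lemma Dterm_bound k s x m : Rabs (Dterm k s x m) <= Mk k * gam ^ m.
Proof.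
  unfold Dterm, Mk. pose proof (Dterm_coef_bound k m) as [H0 H1].
  rewrite Rabs_mult, Rabs_pos_eq by lra.
  pose proof (phi_bound (arg_n b s x m) (S k)).
  pose proof (Rabs_pos (Derive_n phi (S k) (arg_n b s x m))).
  apply Rle_trans with (gam * gam ^ m * (A * INR (fact (S k)) * L ^ S k)); [nra|].
  apply Req_le; ring.
Qed.

(** Differentiating a term multiplies it by [b^-(m+1)], which gives [D (k+1)]. *)
Lemma arg_deriv s x m : is_derive (fun y => arg_n b s y m) x (/ INR b ^ S m).
Proof.
  unfold arg_n. pose proof INR_b_ge2.
  assert (INR b ^ S m <> 0) by (apply pow_nonzero; lra).
  auto_derive; auto. rewrite Rmult_1_l. reflexivity.
Qed.

Lemma Dterm_deriv k s x m :
  is_derive (fun y => Dterm k s y m) x (Dterm (S k) s x m).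
Proof.
  unfold Dterm.
  assert (H : is_derive (fun y => Derive_n phi (S k) (arg_n b s y m)) x
                (/ INR b ^ S m * Derive_n phi (S (S k)) (arg_n b s x m)))
    by (apply (is_derive_comp (Derive_n phi (S k)) (fun y => arg_n b s y m));
        [apply phi_deriv|apply arg_deriv]).
  set (c := gam ^ S m * (/ INR b ^ S m) ^ k).
  replace (gam ^ S m * (/ INR b ^ S m) ^ S k * Derive_n phi (S (S k)) (arg_n b s x m))
    with (c * (/ INR b ^ S m * Derive_n phi (S (S k)) (arg_n b s x m)))
    by (unfold c; rewrite <- (tech_pow_Rmult (/ INR b ^ S m) k); ring).
  apply (is_derive_scal (fun y => Derive_n phi (S k) (arg_n b s y m)) x c _ H).
Qed.

Lemma D_deriv k s x : is_derive (D k s) x (D (S k) s x).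
Proof.
  pose proof gam_range.
  apply (is_derive_opp (fun y => Series (fun m => Dterm k s y m))).
  apply (series_deriv (fun m y => Dterm k s y m) (fun m y => Dterm (S k) s y m)
           gam (Mk k) (Mk (S k))).
  - lra.
  - intros; apply Dterm_bound.
  - intros; apply Dterm_bound.
  - intros; apply Dterm_deriv.
  - intros m y. apply continuity_pt_filterlim.
    apply (ex_derive_continuous (K := R_AbsRing) (V := R_NormedModule)).
    eexists; apply Dterm_deriv.
Qed.

Lemma D_continuous k s x : continuous (D k s) x.
Proof.
  apply (ex_derive_continuous (K := R_AbsRing) (V := R_NormedModule)).
  eexists; apply D_deriv.
Qed.

Lemma D_bound k s x : Rabs (D k s x) <= Mk k / (1 - gam).
Proof.
  pose proof gam_range.
  unfold D. rewrite Rabs_Ropp. apply dom_bound; [lra|]. intros; apply Dterm_bound.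
Qed.

(** Uniform continuity of [D k] on Sigma x R: if [s, s'] share their first
    [N] digits and [|y - y'| <= 2^-N], the first [N] terms differ by
    [O(2^-N)] (the arguments differ by [(y - y')/b^(m+1)]) and the tails
    are [O(gamma^N)]. *)

Lemma arg_diff (s s' : nat -> nat) y y' N m :
  (forall k, (k < N)%nat -> s k = s' k) -> (m < N)%nat ->
  arg_n b s y m - arg_n b s' y' m = (y - y') / INR b ^ S m.
Proof.
  intros Hs Hm. unfold arg_n.
  rewrite (sum_eq (fun k => INR (s k) / INR b ^ (S m - k))
                  (fun k => INR (s' k) / INR b ^ (S m - k))).
  - unfold Rdiv. ring.
  - intros i Hi. rewrite Hs; auto; lia.
Qed.

(** Mean value theorem for [phi^(k)], with the Cauchy estimate on [phi^(k+1)]. *)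
Lemma phi_lipschitz k p p' : Rabs (Derive_n phi k p - Derive_n phi k p') <=
   A * INR (fact (S k)) * L ^ (S k) * Rabs (p - p').
Proof.
  destruct (MVT_abs (Derive_n phi k) (Derive_n phi (S k)) p' p) as (c & Hc & _).
  { intros c _. apply is_derive_Reals, phi_deriv. }
  rewrite Hc. apply Rmult_le_compat_r; [apply Rabs_pos|apply phi_bound].
Qed.

Definition Bk k := A * INR (fact (S (S k))) * L ^ (S (S k)).

Lemma Dterm_close k s s' y y' N m :
  (forall i, (i < N)%nat -> s i = s' i) -> Rabs (y - y') <= (/2) ^ N -> (m < N)%nat ->
  Rabs (Dterm k s y m - Dterm k s' y' m) <= (Bk k * (/2) ^ N) * gam ^ m.
Proof.
  intros Hs Hy Hm. pose proof gam_range. unfold Dterm.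
  rewrite <- Rmult_minus_distr_l, Rabs_mult.
  pose proof (Dterm_coef_bound k m) as [Hc0 Hc1].
  rewrite Rabs_pos_eq by lra.
  pose proof (phi_lipschitz (S k) (arg_n b s y m) (arg_n b s' y' m)) as Hl.
  rewrite (arg_diff s s' y y' N m Hs Hm) in Hl. fold (Bk k) in Hl.
  pose proof (inv_b_pow_range (S m)) as [Hi1 Hi2].
  assert (Hq : Rabs ((y - y') / INR b ^ S m) <= (/2) ^ N).
  { unfold Rdiv. rewrite Rabs_mult, (Rabs_pos_eq (/ INR b ^ S m)) by lra.
    pose proof (Rabs_pos (y - y')). nra. }
  assert (HB : 0 <= Bk k).
  { unfold Bk. pose proof (pos_INR (fact (S (S k)))). pose proof (pow_le L (S (S k)) L_nonneg).
    apply Rmult_le_pos; [apply Rmult_le_pos|]; lra. }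
  assert (0 <= gam ^ m) by (apply pow_le; lra).
  apply Rle_trans with (gam ^ m * (Bk k * (/2) ^ N)); [|lra].
  apply Rmult_le_compat; auto; [apply Rabs_pos|nra|].
  eapply Rle_trans; [exact Hl|]. apply Rmult_le_compat_l; auto.
Qed.

Lemma D_close k s s' y y' N :
  (forall i, (i < S N)%nat -> s i = s' i) -> Rabs (y - y') <= (/2) ^ S N ->
  Rabs (D k s y - D k s' y') <= (Bk k * (/2) ^ S N + 2 * Mk k * gam ^ S N) / (1 - gam).
Proof.
  intros Hs Hy. pose proof gam_range. pose proof (Mk_nonneg k).
  set (d := fun m => Dterm k s y m - Dterm k s' y' m).
  assert (Hdom : forall m, Rabs (d m) <= (2 * Mk k) * gam ^ m).
  { intros m. unfold d. eapply Rle_trans; [apply Rabs_triang|]. rewrite Rabs_Ropp.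
    pose proof (Dterm_bound k s y m). pose proof (Dterm_bound k s' y' m). lra. }
  assert (Hex : forall s y, ex_series (fun m => Dterm k s y m))
    by (intros; apply (dom_ex _ (Mk k) gam); [lra|intros; apply Dterm_bound]).
  assert (E : Series d = Series (fun m => Dterm k s y m) - Series (fun m => Dterm k s' y' m))
    by (apply Series_minus; auto).
  replace (D k s y - D k s' y') with (- (sum_f_R0 d N + (Series d - sum_f_R0 d N)))
    by (rewrite E; unfold D; ring).
  rewrite Rabs_Ropp. eapply Rle_trans; [apply Rabs_triang|].
  assert (T1 : Rabs (sum_f_R0 d N) <= Bk k * (/2) ^ S N / (1 - gam)).
  { apply partial_geom_bound; [lra| |].
    - unfold Bk. pose proof (pos_INR (fact (S (S k)))). pose proof (pow_le L (S (S k)) L_nonneg).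
      pose proof (pow_le (/2) (S N) ltac:(lra)).
      apply Rmult_le_pos; [apply Rmult_le_pos; [apply Rmult_le_pos|]|]; lra.
    - intros m Hm. apply Dterm_close; auto; lia. }
  pose proof (dom_tail d (2 * Mk k) gam N ltac:(lra) Hdom) as T2.
  unfold Rdiv in *. lra.
Qed.

Lemma D_uniformly_continuous k eps : 0 < eps -> exists N, forall s s' y y',
  (forall i, (i < N)%nat -> s i = s' i) -> Rabs (y - y') <= (/2) ^ N ->
  Rabs (D k s y - D k s' y') < eps.
Proof.
  intros He. pose proof gam_range. pose proof (Mk_nonneg k).
  assert (HB : 0 <= Bk k).
  { unfold Bk. pose proof (pos_INR (fact (S (S k)))). pose proof (pow_le L (S (S k)) L_nonneg).
    apply Rmult_le_pos; [apply Rmult_le_pos|]; lra. }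
  set (rho := Rmax (/2) gam).
  assert (Hrho : 0 <= rho < 1)
    by (unfold rho; split; [pose proof (Rmax_l (/2) gam); lra|apply Rmax_lub_lt; lra]).
  set (C := Bk k + 2 * Mk k + 1).
  destruct (pow_lt_1_zero rho ltac:(rewrite Rabs_pos_eq; lra) (eps * (1 - gam) / C))
    as [N HN]; [apply Rdiv_lt_0_compat; [apply Rmult_lt_0_compat|unfold C]; lra|].
  exists (S N). intros s s' y y' Hs Hy.
  eapply Rle_lt_trans; [apply (D_close k s s' y y' N); auto|].
  specialize (HN (S N) ltac:(lia)). rewrite Rabs_pos_eq in HN by (apply pow_le; lra).
  assert (H2 : (/2) ^ S N <= rho ^ S N) by (apply pow_incr; split; [lra|apply Rmax_l]).
  assert (Hg : gam ^ S N <= rho ^ S N) by (apply pow_incr; split; [lra|apply Rmax_r]).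
  assert (Hsum : Bk k * (/2) ^ S N + 2 * Mk k * gam ^ S N <= C * rho ^ S N).
  { pose proof (pow_le rho (S N) ltac:(lra)). unfold C. nra. }
  apply (Rmult_lt_compat_l C) in HN; [|unfold C; lra].
  replace (C * (eps * (1 - gam) / C)) with (eps * (1 - gam)) in HN by (field; unfold C; lra).
  apply (Rmult_lt_reg_r (1 - gam)); [lra|].
  unfold Rdiv. rewrite Rmult_assoc, Rinv_l by lra. lra.
Qed.

Lemma Gamma_deriv s x : is_derive (Gammafun b lambda phi s) x (D 0 s x).
Proof.
  apply (is_derive_ext (fun x => RInt (D 0 s) 0 x)).
  { intros t. unfold Gammafun. apply RInt_ext. intros; symmetry; apply Yfun_D0. }
  apply (is_derive_RInt (D 0 s) (fun x => RInt (D 0 s) 0 x) 0); [|apply D_continuous].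
  apply filter_forall. intros y. apply (RInt_correct (V := R_CompleteNormedModule)).
  apply (ex_RInt_continuous (V := R_CompleteNormedModule)). intros; apply D_continuous.
Qed.

Lemma Derive_n_D_diff (u v : nat -> nat) j : forall x,
  Derive_n (fun t => D 0 u t - D 0 v t) j x = D j u x - D j v x.
Proof.
  induction j as [|j IH]; intros x; [reflexivity|].
  simpl. rewrite (Derive_ext _ _ _ IH). apply is_derive_unique.
  apply (is_derive_minus (D j u) (D j v)); apply D_deriv.
Qed.

Lemma F1_derivatives (f : R -> R) u v :
  (forall x, f x = Gammafun b lambda phi u x - Gammafun b lambda phi v x) ->
  forall j x, Derive_n f (S j) x = D j u x - D j v x.
Proof.
  intros Hf j x.
  assert (Hd : forall t, Derive f t = D 0 u t - D 0 v t).
  { intros t. apply is_derive_unique.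
    apply (is_derive_ext (fun x => Gammafun b lambda phi u x - Gammafun b lambda phi v x));
      [intros; symmetry; apply Hf|].
    apply (is_derive_minus (Gammafun b lambda phi u) (Gammafun b lambda phi v));
      apply Gamma_deriv. }
  replace (S j) with (j + 1)%nat by lia. rewrite <- Derive_n_comp.
  rewrite (Derive_n_ext (Derive_n f 1) (fun t => D 0 u t - D 0 v t)) by exact Hd.
  apply Derive_n_D_diff.
Qed.

(** ** The contradiction argument *)

Definition F1_estimate (eps1 : R) (Q1 : nat) : Prop :=
  forall f : R -> R, in_F1 b lambda phi f ->
    Rbar_le (Finite eps1)
      (Lub_Rbar (fun y => exists x, 0 <= x <= 1 /\ y = Rabs (Derive f x))) /\
    (forall x, 0 <= x <= 1 ->
       exists k : nat, (1 <= k)%nat /\ (k <= Q1)%nat /\ eps1 <= Rabs (Derive_n f k x)).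

Definition uniformly_close m (u v : nat -> nat) :=
  forall y, 0 <= y <= 1 -> Rabs (D 0 u y - D 0 v y) <= / INR (S m).

Definition jet_close m (u v : nat -> nat) x :=
  forall j, (j < S m)%nat -> Rabs (D j u x - D j v x) <= / INR (S m).

Definition degenerate m u v x := u 0%nat <> v 0%nat /\ (uniformly_close m u v \/ jet_close m u v x).

Lemma degenerate_nested m m' u v x : (m <= m')%nat -> degenerate m' u v x -> degenerate m u v x.
Proof.
  intros Hm [H0 [H1|H1]]; split; auto; [left|right].
  - intros y Hy. eapply Rle_trans; [apply H1; auto|apply inv_succ_mono; auto].
  - intros j Hj. eapply Rle_trans; [apply H1; lia|apply inv_succ_mono; auto].
Qed.

Lemma degenerate_of_failure m : ~ F1_estimate (/ INR (S m)) (S m) ->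
  exists u v x, in_Sigma b u /\ in_Sigma b v /\ 0 <= x <= 1 /\ degenerate m u v x.
Proof.
  intros Hfail. apply NNPP; intro Hno. apply Hfail.
  intros f (u & v & Hu & Hv & Huv & Hf). split.
  - apply NNPP; intro Hc. apply Rbar_not_le_lt in Hc.
    apply Hno. exists u, v, 0. repeat split; auto; try lra. left. intros y Hy.
    destruct (Lub_Rbar_correct (fun y => exists x, 0 <= x <= 1 /\ y = Rabs (Derive f x)))
      as [Hub _].
    specialize (Hub (Rabs (Derive f y)) (ex_intro _ y (conj Hy eq_refl))).
    rewrite <- (F1_derivatives f u v Hf 0). change (Derive_n f 1 y) with (Derive f y).
    destruct (Lub_Rbar _) as [l| |]; cbn [Rbar_lt Rbar_le] in Hub, Hc; try contradiction; lra.
  - intros x Hx. apply NNPP; intro Hk. apply Hno.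
    exists u, v, x. repeat split; try tauto; try lra. right.
    intros j Hj. rewrite <- (F1_derivatives f u v Hf j). apply Rnot_lt_le. intros Hlt.
    apply Hk. exists (S j). repeat split; auto; try lia. lra.
Qed.

Lemma D_diff_stable j u v x c : c < Rabs (D j u x - D j v x) -> exists N, forall u' v' x',
  (forall k, (k < N)%nat -> u' k = u k /\ v' k = v k) -> Rabs (x' - x) <= (/2) ^ N ->
  c < Rabs (D j u' x' - D j v' x').
Proof.
  intros Hc. set (d := Rabs (D j u x - D j v x) - c).
  destruct (D_uniformly_continuous j (d / 2)) as [N HN]; [unfold d; lra|].
  exists N. intros u' v' x' Hpre Hx.
  pose proof (HN u' u x' x ltac:(intros; apply Hpre; auto) Hx) as T1.
  pose proof (HN v' v x' x ltac:(intros; apply Hpre; auto) Hx) as T2.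
  pose proof (Rabs_triang_inv (D j u x - D j v x) (D j u' x' - D j v' x')) as T3.
  pose proof (Rabs_triang (D j u' x' - D j u x) (- (D j v' x' - D j v x))) as T4.
  rewrite Rabs_Ropp in T4.
  replace (D j u x - D j v x - (D j u' x' - D j v' x'))
    with (- (D j u' x' - D j u x + - (D j v' x' - D j v x))) in T3 by ring.
  rewrite Rabs_Ropp in T3. unfold d in *. lra.
Qed.

Lemma degenerate_limit u v x m :
  (forall N, exists u' v' x', degenerate m u' v' x' /\
     (forall k, (k < N)%nat -> u' k = u k /\ v' k = v k) /\ Rabs (x' - x) <= (/2) ^ N) ->
  uniformly_close m u v \/ jet_close m u v x.
Proof.
  intros Happ. apply NNPP; intro Hno. apply not_or_and in Hno as [Hn1 Hn2].
  apply not_all_ex_not in Hn1 as [y Hy]. apply imply_to_and in Hy as [Hy Hy2].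
  apply not_all_ex_not in Hn2 as [j Hj]. apply imply_to_and in Hj as [Hj Hj2].
  destruct (D_diff_stable 0 u v y (/ INR (S m))) as [N1 HN1]; [lra|].
  destruct (D_diff_stable j u v x (/ INR (S m))) as [N2 HN2]; [lra|].
  destruct (Happ (Nat.max N1 N2)) as (u' & v' & x' & [_ [Hc|Hc]] & Hpre & Hx').
  - specialize (Hc y Hy).
    assert (Hyy : Rabs (y - y) <= (/2) ^ N1) by (rewrite Rminus_eq_0, Rabs_R0; apply pow_le; lra).
    pose proof (HN1 u' v' y ltac:(intros; apply Hpre; lia) Hyy). lra.
  - specialize (Hc j Hj).
    assert (Hxx : Rabs (x' - x) <= (/2) ^ N2)
      by (eapply Rle_trans; [exact Hx'|apply half_pow_mono; lia]).
    pose proof (HN2 u' v' x' ltac:(intros; apply Hpre; lia) Hxx). lra.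
Qed.

Lemma flat_point u v x : (forall m, uniformly_close m u v \/ jet_close m u v x) ->
  exists x0, forall j, D j u x0 - D j v x0 = 0.
Proof.
  intros Hclose. destruct (classic (forall m, uniformly_close m u v)) as [Hall|Hnall].
  - (* Y_u - Y_v vanishes on [0,1], hence all its derivatives vanish at 1/2 *)
    assert (Hz : forall y, 0 <= y <= 1 -> D 0 u y - D 0 v y = 0).
    { intros y Hy. apply (zero_of_inv _ 0). intros m _. apply Hall; auto. }
    exists (/2). intros j.
    rewrite <- Derive_n_D_diff, (Derive_n_ext_loc _ (fun _ => 0)).
    + destruct j; [reflexivity|]. apply Derive_n_const.
    + apply (locally_of_ball (/2) (/2)); [lra|]. intros t Ht.
      apply Rabs_lt_between in Ht. apply Hz. lra.
  - (* from some level on only the jet condition can hold *)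
    apply not_all_ex_not in Hnall as [m0 Hm0].
    exists x. intros j. apply (zero_of_inv _ (Nat.max m0 j)). intros m Hm.
    destruct (Hclose m) as [H1|H1]; [|apply H1; lia].
    exfalso. apply Hm0. intros y Hy.
    eapply Rle_trans; [apply H1; auto|apply inv_succ_mono; lia].
Qed.

Lemma D_diff_zero u v x0 : (forall j, D j u x0 - D j v x0 = 0) -> forall y, D 0 u y = D 0 v y.
Proof.
  intros H0 y. pose proof gam_range.
  set (K := 2 * A * L * gam / (1 - gam)).
  assert (HK : 0 <= K).
  { unfold K. apply Rmult_le_pos; [|apply Rlt_le, Rinv_0_lt_compat; lra].
    apply Rmult_le_pos; [|lra]. apply Rmult_le_pos; lra. }
  enough (E : D 0 u y - D 0 v y = 0) by lra.
  apply (identity_theorem (fun j y => D j u y - D j v y) K L HK L_nonneg) with x0; auto.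
  - intros j t. apply (is_derive_minus (D j u) (D j v)); apply D_deriv.
  - intros j t. eapply Rle_trans; [apply Rabs_triang|]. rewrite Rabs_Ropp.
    pose proof (D_bound j u t). pose proof (D_bound j v t).
    apply Rle_trans with (2 * (Mk j / (1 - gam))); [lra|].
    apply Req_le. unfold K, Mk. simpl pow. field. lra.
Qed.

Lemma F1_estimate_exists : cond_H b lambda phi ->
  exists (eps1 : R) (Q1 : nat), 0 < eps1 /\ (1 <= Q1)%nat /\ F1_estimate eps1 Q1.
Proof.
  intros HH. apply NNPP; intro Hneg.
  assert (Hdeg : forall m, exists u v x,
             in_Sigma b u /\ in_Sigma b v /\ 0 <= x <= 1 /\ degenerate m u v x).
  { intros m. apply degenerate_of_failure. intros Hest. apply Hneg.
    exists (/ INR (S m)), (S m). split; [apply Rinv_0_lt_compat, lt_0_INR; lia|].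
    split; [lia|exact Hest]. }
  destruct (nested_cluster_point b degenerate degenerate_nested Hdeg)
    as (u & v & x & Hu & Hv & _ & Happ).
  assert (Huv0 : u 0%nat <> v 0%nat).
  { destruct (Happ 0%nat 1%nat) as (u' & v' & x' & _ & _ & _ & [Hne _] & Hpre & _).
    destruct (Hpre 0%nat ltac:(lia)) as [E1 E2]. congruence. }
  assert (Hclose : forall m, uniformly_close m u v \/ jet_close m u v x).
  { intros m. apply degenerate_limit. intros N.
    destruct (Happ m N) as (u' & v' & x' & _ & _ & _ & Hd & Hpre & Hx).
    exists u', v', x'; auto. }
  destruct (flat_point u v x Hclose) as [x0 Hx0].
  destruct (HH v u Hv Hu) as [y Hy]; [intros E; apply Huv0; rewrite E; reflexivity|].
  apply Hy. rewrite !Yfun_D0, (D_diff_zero u v x0 Hx0 y). ring.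
Qed.

End Transversality.

Theorem mainTheorem16 (b : nat) (lambda : R) (phi : R -> R) :
  (2 <= b)%nat ->
  / INR b < lambda -> lambda < 1 ->
  real_analytic phi -> Z_periodic phi -> cond_H b lambda phi ->
  exists (eps1 : R) (Q1 : nat), 0 < eps1 /\ (1 <= Q1)%nat /\
    forall f : R -> R, in_F1 b lambda phi f ->
      Rbar_le (Finite eps1)
        (Lub_Rbar (fun y => exists x, 0 <= x <= 1 /\ y = Rabs (Derive f x))) /\
      (forall x, 0 <= x <= 1 ->
         exists k : nat, (1 <= k)%nat /\ (k <= Q1)%nat /\
           eps1 <= Rabs (Derive_n f k x)).
Proof.
  intros hb hl1 _ Han Hper HH.
  destruct (phi_bound phi Han Hper) as (A & L & HA & HL & Hb).
  exact (F1_estimate_exists b lambda phi hb hl1 A L HA HL Hb (phi_deriv phi Han) HH).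
Qed.
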